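(* If $A$ is a profinite algebra which is left semiartinian and left selfinjective, then $A$ is a finite dimensional quasi-Frobenius algebra.
   Context: A profinite algebra is an algebra over a field which is an inverse limit of finite dimensional algebras (equivalently, the dual algebra $C^*$ of a coalgebra $C$). A ring is left semiartinian if every nonzero left module (equivalently every nonzero quotient of the ring as left module) has a nonzero socle. A ring is quasi-Frobenius if it is left (equivalently right) selfinjective and left (equivalently right) artinian. *)

From HB Require Import structures.
From mathcomp Require Import all_boot all_algebra.
From mathcomp Require Import falgebra.
Set Implicit Arguments. Unset Strict Implicit. Unset Printing Implicit Defensive.
Import GRing.Theory.
Local Open Scope ring_scope.

Definition submodule (R : pzRingType) (M : lmodType R) (S : M -> Prop) : Prop :=
  S 0 /\ forall (a : R) (u v : M), S u -> S v -> S (a *: u + v).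

Definition simple_submodule (R : pzRingType) (M : lmodType R) (S : M -> Prop) : Prop :=
  submodule S /\ (exists m, S m /\ m <> 0) /\
  forall T : M -> Prop, submodule T -> (forall m, T m -> S m) ->
    (forall m, T m -> m = 0) \/ (forall m, S m -> T m).

Definition nonzero_socle (R : pzRingType) (M : lmodType R) : Prop :=
  exists S : M -> Prop, simple_submodule S.

Definition left_semiartinian (R : pzRingType) : Prop :=
  forall M : lmodType R, (exists m : M, m <> 0) -> nonzero_socle M.

Definition injective_module (R : pzRingType) (E : lmodType R) : Prop :=
  forall (M N : lmodType R) (f : M -> N) (g : M -> E),
    linear f -> injective f -> linear g ->
    exists h : N -> E, linear h /\ forall m, h (f m) = g m.

Definition left_selfinjective (R : pzRingType) : Prop :=
  injective_module (R^o : lmodType R).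

Definition left_ideal (R : pzRingType) (I : R -> Prop) : Prop :=
  submodule (I : R^o -> Prop).

Definition left_artinian (R : pzRingType) : Prop :=
  forall I : nat -> R -> Prop,
    (forall n, left_ideal (I n)) ->
    (forall n x, I n.+1 x -> I n x) ->
    exists N, forall n, (N <= n)%N -> forall x, I n x <-> I N x.

Definition quasi_Frobenius (R : pzRingType) : Prop :=
  left_selfinjective R /\ left_artinian R.

Definition finite_dimensional (K : fieldType) (V : lmodType K) : Prop :=
  exists s : seq V, forall v : V,
    exists c : nat -> K, v = \sum_(i < size s) c i *: s`_i.

Definition alg_morph (K : fieldType) (U V : lalgType K) (g : U -> V) : Prop :=
  (forall (a : K) (x y : U), g (a *: x + y) = a *: g x + g y) /\
  g 1 = 1 /\ forall x y, g (x * y) = g x * g y.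

(* A is profinite: A is (isomorphic, via the canonical projections p_i, to)
   the inverse limit of an inverse system of finite dimensional K-algebras
   indexed by a directed preordered set. *)
Definition profinite_algebra (K : fieldType) (A : algType K) : Prop :=
  exists (I : Type) (le : I -> I -> Prop) (B : I -> falgType K)
         (f : forall i j, le i j -> B j -> B i) (p : forall i, A -> B i),
    inhabited I /\
    ((forall i, le i i) /\ (forall i j k, le i j -> le j k -> le i k)) /\
    (forall i j, exists k, le i k /\ le j k) /\
    (forall i j (h : le i j), alg_morph (f i j h)) /\
    (forall i (h : le i i) (x : B i), f i i h x = x) /\
    (forall i j k (hij : le i j) (hjk : le j k) (hik : le i k) (x : B k),
        f i j hij (f j k hjk x) = f i k hik x) /\
    (forall i, alg_morph (p i)) /\
    (forall i j (h : le i j) (a : A), f i j h (p j a) = p i a) /\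
    (forall a : A, (forall i, p i a = 0) -> a = 0) /\
    (forall x : forall i, B i,
       (forall i j (h : le i j), f i j h (x j) = x i) ->
       exists a : A, forall i, p i a = x i).

(* If some canonical projection p_k : A -> B_k is injective, A embeds
   K-linearly into a finite dimensional space, so A is finite dimensional and left
   artinian, hence quasi-Frobenius. Otherwise every kernel J_k is a nonzero two-sided
   ideal. By semiartinianity J_k contains some w generating a simple left ideal Aw, and
   selfinjectivity (Baer's criterion) makes AwA a minimal two-sided ideal, so AwA meets
   some smaller kernel J_k' trivially. Iterating gives an infinite independent family of
   nonzero two-sided ideals H_n. For any set X of indices, Baer's criterion yields y
   acting on the H_n as the identity for n in X and as 0 otherwise. Choosing z that
   generates a simple module modulo the elements eventually annihilated by the H_n, and
   X splitting the n with H_n z <> 0 into two infinite halves, y z and z cannot generate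
   each other modulo that ideal, a contradiction. *)

From HB Require Import structures.
From mathcomp Require Import all_boot all_algebra.
From mathcomp Require Import falgebra.
From mathcomp Require Import boolp.
Set Implicit Arguments. Unset Strict Implicit. Unset Printing Implicit Defensive.
Import GRing.Theory.
Local Open Scope ring_scope.
Local Open Scope quotient_scope.

(** * Submodules and quotient modules *)

(* Prop-valued submodules are turned into boolean predicates with [asbool], so that the
   library's subtype and quotient constructions apply. *)

Section Submodule.
Variables (R : pzRingType) (M : lmodType R) (P : M -> Prop).
Hypothesis subP : submodule P.

Lemma submod0 : P 0. Proof. by case: subP. Qed.

Lemma submodDZ a u v : P u -> P v -> P (a *: u + v).
Proof. by case: subP => _; apply. Qed.

Lemma submodZ a u : P u -> P (a *: u).
Proof. by move=> Pu; rewrite -[_ *: _]addr0; apply: submodDZ Pu submod0. Qed.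

Lemma submodD u v : P u -> P v -> P (u + v).
Proof. by rewrite -{2}[u]scale1r; apply: submodDZ. Qed.

Lemma submodN u : P u -> P (- u).
Proof. by rewrite -scaleN1r; apply: submodZ. Qed.

Lemma submodB u v : P u -> P v -> P (u - v).
Proof. by move=> Pu Pv; apply: submodD Pu (submodN Pv). Qed.

Lemma submod_sum (I : Type) (r : seq I) (Pi : pred I) (F : I -> M) :
  (forall i, Pi i -> P (F i)) -> P (\sum_(i <- r | Pi i) F i).
Proof.
move=> PF; elim/big_rec: _ => [|i x Pii Px]; first exact: submod0.
exact: submodD (PF i Pii) Px.
Qed.

Definition submod_pred of submodule P : {pred M} := fun x => `[< P x >].

Fact submod_pred_closed : submod_closed (submod_pred subP).
Proof.
split; first exact/asboolP/submod0.
move=> a u v /asboolP Pu /asboolP Pv; apply/asboolP; exact: submodDZ.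
Qed.

HB.instance Definition _ := GRing.isSubmodClosed.Build R M (submod_pred subP)
  submod_pred_closed.

Definition submod_type : Type := {x : M | submod_pred subP x}.
HB.instance Definition _ := [isSub for val : submod_type -> M].
HB.instance Definition _ := [Choice of submod_type by <:].
HB.instance Definition _ := [SubChoice_isSubLmodule of submod_type by <:].

Lemma submod_valP (x : submod_type) : P (val x).
Proof. exact/asboolP/(valP x). Qed.

Lemma submod_val_linear : linear (val : submod_type -> M).
Proof. by move=> a x y. Qed.

Definition submod_elt x (Px : P x) : submod_type := Sub x (introT (asboolP _) Px).

End Submodule.

Section QuotientModule.
Variables (R : pzRingType) (M : lmodType R) (Q : M -> Prop).
Hypothesis subQ : submodule Q.

Definition eqmod : rel M := fun x y => `[< Q (x - y) >].

Lemma eqmod_refl : reflexive eqmod.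
Proof. by move=> x; apply/asboolP; rewrite subrr; apply: submod0. Qed.

Lemma eqmod_sym : symmetric eqmod.
Proof.
by move=> x y; apply/asboolP/asboolP => /(submodN subQ); rewrite opprB.
Qed.

Lemma eqmod_trans : transitive eqmod.
Proof.
move=> y x z /asboolP Qxy /asboolP Qyz; apply/asboolP.
by rewrite -[x](subrK y) -addrA; apply: submodD.
Qed.

Definition eqmod_equiv := EquivRel eqmod eqmod_refl eqmod_sym eqmod_trans.

Definition quotmod := {eq_quot eqmod_equiv}.
HB.instance Definition _ := Choice.on quotmod.
HB.instance Definition _ := Quotient.on quotmod.

Notation pi := \pi_quotmod.

Lemma quotmodP x y : pi x = pi y <-> Q (x - y).
Proof.
split=> [/(eqmodP eqmod_equiv) | Qxy]; first exact: asboolW.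
by apply/(eqmodP eqmod_equiv); apply/asboolP.
Qed.

Lemma quotmod_repr x : Q (x - repr (pi x)).
Proof. by apply/quotmodP; rewrite reprK. Qed.

Definition quotmod_zero : quotmod := lift_cst quotmod 0.
Definition quotmod_add := lift_op2 quotmod +%R.
Definition quotmod_opp := lift_op1 quotmod -%R.
Definition quotmod_scale a := lift_op1 quotmod ( *:%R a).

Lemma pi_zero : pi 0 = quotmod_zero.
Proof. by unlock quotmod_zero. Qed.

Lemma pi_add x y : pi (x + y) = quotmod_add (pi x) (pi y).
Proof.
unlock quotmod_add; apply/quotmodP; rewrite opprD addrACA.
by apply: (submodD subQ); apply: quotmod_repr.
Qed.

Lemma pi_opp x : pi (- x) = quotmod_opp (pi x).
Proof.
unlock quotmod_opp; apply/quotmodP; rewrite opprK addrC -opprB.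
exact/(submodN subQ)/quotmod_repr.
Qed.

Lemma pi_scale a x : pi (a *: x) = quotmod_scale a (pi x).
Proof.
unlock quotmod_scale; apply/quotmodP; rewrite -scalerBr.
exact/(submodZ subQ)/quotmod_repr.
Qed.

Lemma quotmod_addA : associative quotmod_add.
Proof. by elim/quotW=> x; elim/quotW=> y; elim/quotW=> z; rewrite -!pi_add addrA. Qed.

Lemma quotmod_addC : commutative quotmod_add.
Proof. by elim/quotW=> x; elim/quotW=> y; rewrite -!pi_add addrC. Qed.

Lemma quotmod_add0 : left_id quotmod_zero quotmod_add.
Proof. by elim/quotW=> x; rewrite -pi_zero -pi_add add0r. Qed.

Lemma quotmod_addN : left_inverse quotmod_zero quotmod_opp quotmod_add.
Proof. by elim/quotW=> x; rewrite -pi_opp -pi_add addNr pi_zero. Qed.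

HB.instance Definition _ := GRing.isZmodule.Build quotmod
  quotmod_addA quotmod_addC quotmod_add0 quotmod_addN.

Lemma quotmod_piD x y : pi (x + y) = pi x + pi y.
Proof. exact: pi_add. Qed.

Lemma quotmod_scaleA a b x :
  quotmod_scale a (quotmod_scale b x) = quotmod_scale (a * b) x.
Proof. by elim/quotW: x => x; rewrite -!pi_scale scalerA. Qed.

Lemma quotmod_scale1 : left_id 1 quotmod_scale.
Proof. by elim/quotW=> x; rewrite -pi_scale scale1r. Qed.

Lemma quotmod_scaleDr : right_distributive quotmod_scale +%R.
Proof.
move=> a; elim/quotW=> x; elim/quotW=> y.
by rewrite -quotmod_piD -!pi_scale -quotmod_piD scalerDr.
Qed.

Lemma quotmod_scaleDl x : {morph quotmod_scale^~ x : a b / a + b}.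
Proof. by elim/quotW: x => x a b; rewrite -!pi_scale -quotmod_piD scalerDl. Qed.

HB.instance Definition _ := GRing.Zmodule_isLmodule.Build R quotmod
  quotmod_scaleA quotmod_scale1 quotmod_scaleDr quotmod_scaleDl.

Lemma quotmod_pi0 : pi 0 = 0.
Proof. exact: pi_zero. Qed.

Lemma quotmod_piZ a x : pi (a *: x) = a *: pi x.
Proof. exact: pi_scale. Qed.

Lemma quotmod_piB x y : pi (x - y) = pi x - pi y.
Proof. by rewrite quotmod_piD pi_opp. Qed.

End QuotientModule.

Lemma linear_fun0 (R : pzRingType) (M N : lmodType R) (f : M -> N) :
  linear f -> f 0 = 0.
Proof.
by move=> f_lin; apply/(addIr (f 0)); rewrite add0r -{1}[f 0]scale1r -f_lin scale1r addr0.
Qed.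

Lemma linear_funD (R : pzRingType) (M N : lmodType R) (f : M -> N) :
  linear f -> {morph f : x y / x + y}.
Proof. by move=> f_lin x y; rewrite -[x]scale1r f_lin !scale1r. Qed.

Lemma linear_funZ (R : pzRingType) (M N : lmodType R) (f : M -> N) :
  linear f -> forall a, {morph f : x / a *: x}.
Proof. by move=> f_lin a x; rewrite -[a *: x]addr0 f_lin (linear_fun0 f_lin) addr0. Qed.

Lemma linear_fun_inj (R : pzRingType) (M N : lmodType R) (f : M -> N) :
  linear f -> (forall x, f x = 0 -> x = 0) -> injective f.
Proof.
move=> f_lin ker0 x y fxy; apply/eqP; rewrite -subr_eq0; apply/eqP/ker0.
by rewrite (linear_funD f_lin) -scaleN1r (linear_funZ f_lin) scaleN1r fxy subrr.
Qed.

Lemma factor_through (X Y Z : Type) (z0 : Z) (D : X -> Prop) (h : X -> Y) (g : X -> Z) :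
  (forall x y, D x -> D y -> h x = h y -> g x = g y) ->
  exists phi : Y -> Z, forall x, D x -> phi (h x) = g x.
Proof.
move=> hg; have [phi phiP] : {phi : Y -> Z & forall y x, D x -> h x = y -> phi y = g x}.
  apply: (@choice _ _ (fun y z => forall x, D x -> h x = y -> z = g x)) => y.
  have [[x Dx <-] | nohx] := pselect (exists2 x, D x & h x = y).
    by exists (g x) => x' Dx' /esym; apply: hg.
  by exists z0 => x Dx hx; case: nohx; exists x.
by exists phi => x Dx; apply: phiP.
Qed.

(** * Simple generators over semiartinian rings *)

(* [simple_generator m]: the cyclic module [R m] is simple. *)
Definition simple_generator (R : pzRingType) (M : lmodType R) (m : M) : Prop :=
  m <> 0 /\ forall a : R, a *: m = 0 \/ exists c, c *: (a *: m) = m.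

Section SemiartinianModules.
Variable R : pzRingType.
Hypothesis semiR : left_semiartinian R.

Lemma semiartinian_simple_generator (M : lmodType R) :
  (exists m : M, m <> 0) -> exists m : M, simple_generator m.
Proof.
move=> /semiR [S [subS [[m [Sm m0]] minS]]]; exists m; split=> // a.
pose T x := exists c, x = c *: (a *: m).
have subT : submodule T.
  split; first by exists 0; rewrite scale0r.
  by move=> b _ _ [c ->] [d ->]; exists (b * c + d); rewrite scalerDl scalerA.
have TS x : T x -> S x by case=> c ->; apply/(submodZ subS)/(submodZ subS).
case: (minS T subT TS) => [T0 | ST]; first by left; apply: T0; exists 1; rewrite scale1r.
by right; have [c Em] := ST m Sm; exists c.
Qed.

Lemma submodule_simple_generator (M : lmodType R) (W : M -> Prop) : submodule W ->
  (exists2 x, W x & x <> 0) -> exists2 w, W w & simple_generator w.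
Proof.
move=> subW [x Wx x0].
have [|m [m0 gen_m]] := @semiartinian_simple_generator (submod_type subW).
  by exists (submod_elt subW Wx) => /(congr1 val).
exists (val m); first exact: submod_valP.
split=> [vm0 | a]; first by apply: m0; apply: val_inj.
case: (gen_m a) => [am0 | [c Em]].
  by left; rewrite -[_ *: _]/(val (a *: m)) am0.
by right; exists c; rewrite -[_ *: _]/(val (c *: (a *: m))) Em.
Qed.

Lemma quotient_simple_generator (M : lmodType R) (Q : M -> Prop) :
  submodule Q -> (exists m, ~ Q m) ->
  exists2 z, ~ Q z & forall a, Q (a *: z) \/ exists c, Q (c *: (a *: z) - z).
Proof.
move=> subQ [m Qm].
have pi0 x : \pi_(quotmod subQ) x = 0 <-> Q x.
  by rewrite -(quotmod_pi0 subQ) quotmodP subr0.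
have [|q [q0 gen_q]] := @semiartinian_simple_generator (quotmod subQ).
  by exists (\pi m) => /pi0.
exists (repr q) => [Qq|a]; first by apply: q0; rewrite -[q]reprK; apply/pi0.
case: (gen_q a) => [aq0 | [c Eq]]; [left | right; exists c]; apply/pi0.
  by rewrite quotmod_piZ reprK.
by rewrite quotmod_piB !quotmod_piZ reprK Eq subrr.
Qed.

Lemma left_ideal_simple_generator (W : R -> Prop) : left_ideal W ->
  (exists2 x, W x & x <> 0) -> exists2 w : R, W w & simple_generator (w : R^o).
Proof. exact: submodule_simple_generator. Qed.

Lemma left_ideal_quotient_simple_generator (Q : R -> Prop) : left_ideal Q ->
  (exists m, ~ Q m) ->
  exists2 z : R, ~ Q z & forall a, Q (a * z) \/ exists c, Q (c * (a * z) - z).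
Proof. exact: quotient_simple_generator. Qed.

End SemiartinianModules.

(** * Minimal two-sided ideals in selfinjective rings *)

Lemma selfinjective_baer (R : pzRingType) (L : R -> Prop) (phi : R -> R) :
  left_selfinjective R -> left_ideal L ->
  (forall a u v, L u -> L v -> phi (a * u + v) = a * phi u + phi v) ->
  exists y, forall u, L u -> phi u = u * y.
Proof.
move=> injR subL phi_lin.
have [|h [h_lin h_ext]] := injR (submod_type subL) R^o val (phi \o val)
  (@submod_val_linear _ _ _ subL) val_inj.
  by move=> a x y; apply: phi_lin; apply: submod_valP.
exists (h 1) => u Lu; move: (h_ext (submod_elt subL Lu)) => /= <-.
by rewrite -[u in h u]mulr1 -[u * 1]addr0 [h _]h_lin (linear_fun0 h_lin) addr0.
Qed.

Definition two_sided_ideal (R : pzRingType) (I : R -> Prop) : Prop :=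
  left_ideal I /\ forall a x, I x -> I (x * a).

Lemma left_idealP (R : pzRingType) (I : R -> Prop) :
  I 0 -> (forall a u v, I u -> I v -> I (a * u + v)) -> left_ideal I.
Proof. by split. Qed.

Section TwoSidedIdeal.
Variables (R : pzRingType) (I : R -> Prop).
Hypothesis idealI : two_sided_ideal I.

Lemma idealMl a x : I x -> I (a * x).
Proof. exact: (submodZ (proj1 idealI)). Qed.

Lemma idealMr a x : I x -> I (x * a).
Proof. exact: (proj2 idealI). Qed.

End TwoSidedIdeal.

Fixpoint left_span (R : pzRingType) (s : seq R) (v : R) : Prop :=
  if s is g :: s' then exists c u, left_span s' u /\ v = c * g + u else v = 0.

Lemma left_span_ideal (R : pzRingType) (s : seq R) : left_ideal (left_span s).
Proof.
elim: s => [|g s [span0 spanDZ]]; apply: left_idealP => /=.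
- by [].
- by move=> a u v -> ->; rewrite mulr0 addr0.
- by exists 0, 0; rewrite mul0r addr0.
move=> a _ _ [c [u [Su ->]]] [c' [u' [Su' ->]]].
exists (a * c + c'), (a * u + u'); split; first exact: spanDZ.
by rewrite mulrDr mulrA mulrDl addrACA.
Qed.

Definition ideal_gen (R : pzRingType) (w v : R) : Prop :=
  exists s : seq (R * R), v = \sum_(p <- s) p.1 * w * p.2.

Section IdealGen.
Variables (R : pzRingType) (w : R).

Lemma ideal_gen_two_sided : two_sided_ideal (ideal_gen w).
Proof.
split; first apply: left_idealP.
- by exists [::]; rewrite big_nil.
- move=> a _ _ [s1 ->] [s2 ->]; exists ([seq (a * p.1, p.2) | p <- s1] ++ s2).
  rewrite big_cat big_map mulr_sumr; congr (_ + _).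
  by apply: eq_bigr => p _; rewrite !mulrA.
move=> a _ [s ->]; exists [seq (p.1, p.2 * a) | p <- s].
by rewrite big_map mulr_suml; apply: eq_bigr => p _; rewrite mulrA.
Qed.

Lemma ideal_gen_id : ideal_gen w w.
Proof. by exists [:: (1, 1)]; rewrite big_seq1 mul1r mulr1. Qed.

Lemma ideal_gen_sub (I : R -> Prop) : two_sided_ideal I -> I w ->
  forall x, ideal_gen w x -> I x.
Proof.
move=> idI Iw _ [s ->]; apply: (submod_sum (proj1 idI)) => p _.
exact/(idealMr idI)/(idealMl idI).
Qed.

Lemma ideal_gen_left_span x : ideal_gen w x ->
  exists s, left_span [seq w * b | b <- s] x.
Proof.
case=> s ->; exists (map snd s); elim: s => [|p s IH]; first by rewrite big_nil.
by rewrite big_cons; exists p.1, (\sum_(q <- s) q.1 * w * q.2); rewrite mulrA.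
Qed.

End IdealGen.

Section SimpleGenerator.
Variables (R : pzRingType) (w : R).
Hypothesis gen_w : simple_generator (w : R^o).

Lemma simple_generator_annihilator (U : R -> Prop) b c : left_ideal U ->
  ~ U (w * b) -> U (c * (w * b)) -> c * w = 0.
Proof.
case: gen_w => _ /(_ c) [//| [d Ed]] idU Uwb Ucwb; case: Uwb.
by rewrite -[w in w * b](Ed : d * (c * w) = w) -!mulrA; apply: (submodZ idU).
Qed.

Lemma left_span_hom_to_simple (s : seq R) (W : R -> Prop) : left_ideal W ->
  (forall x, W x -> left_span [seq w * b | b <- s] x) -> (exists2 x, W x & x <> 0) ->
  exists phi : R -> R,
    [/\ forall a u v, W u -> W v -> phi (a * u + v) = a * phi u + phi v,
        forall x, W x -> exists c, phi x = c * w
      & exists2 x, W x & phi x <> 0].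
Proof.
(* Either [w * b] lies in the span [U] of the other generators and [b] can be dropped,
   or [c * (w * b) \in U] forces [c * w = 0], so that [c * (w * b) + u |-> c * w] is well
   defined; if this map vanishes on [W], then [W] lies in [U]. *)
elim: s W => [|b s IH] W idW Wspan [x0 Wx0 x00]; first by case: x00; apply: Wspan.
pose U := left_span [seq w * b | b <- s].
have idU : left_ideal U := left_span_ideal _.
have [Uwb | Uwb] := pselect (U (w * b)).
  apply: IH => // [x /Wspan [c [u [Uu ->]]]|]; first exact: (submodDZ idU).
  by exists x0.
have [|phi phiE] := @factor_through (R * R) R R 0 (fun p => U p.2)
  (fun p => p.1 * (w * b) + p.2) (fun p => p.1 * w).
  move=> [c u] [c' u'] /= Uu Uu' E; apply/eqP; rewrite -subr_eq0 -mulrBl.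
  apply/eqP/(simple_generator_annihilator idU Uwb).
  have -> : (c - c') * (w * b) = (c * (w * b) + u) - (c' * (w * b) + u).
    by rewrite opprD addrACA subrr addr0 mulrBl.
  by rewrite E opprD addrACA subrr add0r; apply: (submodB idU).
have phi_span x : W x -> exists c u, [/\ U u, x = c * (w * b) + u & phi x = c * w].
  by move=> /Wspan [c [u [Uu ->]]]; exists c, u; split=> //; apply: (phiE (c, u)).
have [[x Wx phix0] | phi0] := pselect (exists2 x, W x & phi x <> 0).
  exists phi; split; last by exists x.
    move=> a _ _ /phi_span [c [u [Uu -> ->]]] /phi_span [c' [u' [Uu' -> ->]]].
    have -> : a * (c * (w * b) + u) + (c' * (w * b) + u') =
              (a * c + c') * (w * b) + (a * u + u').
      by rewrite mulrDr mulrA mulrDl addrACA.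
    rewrite (phiE (a * c + c', a * u + u')) /= ?mulrDl ?mulrA //.
    exact: (submodDZ idU).
  by move=> v /phi_span [c [u [_ _ ->]]]; exists c.
apply: IH => //; last by exists x0.
move=> x Wx; have [c [u [Uu Ex phix]]] := phi_span x Wx.
have cw0 : c * w = 0.
  by rewrite -phix; apply: contrapT => phix0; apply: phi0; exists x.
by rewrite Ex mulrA cw0 mul0r add0r.
Qed.

Hypothesis injR : left_selfinjective R.

Lemma ideal_gen_minimal (J : R -> Prop) x : two_sided_ideal J ->
  ideal_gen w x -> J x -> x <> 0 -> J w.
Proof.
move=> idJ /ideal_gen_left_span [s span_x] Jx x0.
pose W v := exists a, v = a * x.
have idW : left_ideal W.
  apply: left_idealP => [|a _ _ [c ->] [d ->]]; first by exists 0; rewrite mul0r.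
  by exists (a * c + d); rewrite mulrDl mulrA.
have [|| phi [phi_lin phi_w [_ [a ->] phi0]]] := @left_span_hom_to_simple s W idW.
- by move=> _ [a ->]; apply: (submodZ (left_span_ideal [seq w * b | b <- s])).
- by exists x => //; exists 1; rewrite mul1r.
(* By Baer's criterion [phi] is a right multiplication, so its values stay in [J]. *)
have [y phiy] := selfinjective_baer injR idW phi_lin.
have [c Ec] := phi_w _ (ex_intro _ a erefl).
have Jcw : J (c * w) by rewrite -Ec phiy; [exact/(idealMr idJ)/(idealMl idJ) | exists a].
case: gen_w => _ /(_ c) [cw0 | [d Ed]]; first by case: phi0; rewrite Ec.
by rewrite -Ed; apply: (idealMl idJ).
Qed.

End SimpleGenerator.

(** * Independent families of ideals *)

Definition independent (M : zmodType) (H : nat -> M -> Prop) : Prop :=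
  forall N (h : nat -> M), (forall n, H n (h n)) ->
    \sum_(n < N) h n = 0 -> forall n, (n < N)%N -> h n = 0.

Lemma sum_widen (M : zmodType) (h : nat -> M) N N' :
  (forall n, (N <= n)%N -> h n = 0) -> (N <= N')%N ->
  \sum_(n < N') h n = \sum_(n < N) h n.
Proof.
move=> h0 leNN'; rewrite [RHS](big_ord_widen N' h leNN') [RHS]big_mkcond.
by apply: eq_bigr => i _; case: ltnP => // /h0.
Qed.

Section FamilySum.
Variables (R : pzRingType) (M : lmodType R) (H : nat -> M -> Prop).
Hypothesis subH : forall n, submodule (H n).

Definition family_sum (X : nat -> Prop) (v : M) : Prop :=
  exists N (h : nat -> M), [/\ forall n, H n (h n), forall n, ~ X n -> h n = 0,
    forall n, (N <= n)%N -> h n = 0 & v = \sum_(n < N) h n].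

Lemma family_sum_submodule X : submodule (family_sum X).
Proof.
split.
  exists 0%N, (fun=> 0); split=> //; last by rewrite big_ord0.
  by move=> n; apply: submod0.
move=> a _ _ [N1 [h1 [Hh1 Xh1 Nh1 ->]]] [N2 [h2 [Hh2 Xh2 Nh2 ->]]].
exists (maxn N1 N2), (fun n => a *: h1 n + h2 n); split.
- by move=> n; apply: submodDZ.
- by move=> n Xn; rewrite Xh1 // Xh2 // scaler0 addr0.
- by move=> n; rewrite geq_max => /andP[/Nh1 -> /Nh2 ->]; rewrite scaler0 addr0.
rewrite big_split /= -scaler_sumr.
by rewrite (sum_widen Nh1 (leq_maxl _ _)) (sum_widen Nh2 (leq_maxr _ _)).
Qed.

Lemma family_sum_single X n x : X n -> H n x -> family_sum X x.
Proof.
move=> Xn Hx; exists n.+1, (fun m => if m == n then x else 0); split.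
- by move=> m; case: eqP => [-> | _] //; apply: submod0.
- by move=> m; case: eqP => [-> | _].
- by move=> m; case: eqP => [-> | _] //; rewrite ltnn.
rewrite big_ord_recr /= eqxx big1 ?add0r // => i _.
by rewrite (ltn_eqF (ltn_ord i)).
Qed.

Lemma family_sum_disjoint X x : independent H ->
  family_sum X x -> family_sum (fun n => ~ X n) x -> x = 0.
Proof.
move=> indepH [N1 [h1 [Hh1 Xh1 Nh1 Ex1]]] [N2 [h2 [Hh2 Xh2 Nh2 Ex2]]].
pose N := maxn N1 N2.
have h12 n : (n < N)%N -> h1 n - h2 n = 0.
  apply: (indepH N (fun n => h1 n - h2 n)) => [m|]; first exact: submodB.
  rewrite sumrB (sum_widen Nh1 (leq_maxl _ _)) (sum_widen Nh2 (leq_maxr _ _)).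
  by rewrite -Ex1 -Ex2 subrr.
rewrite Ex1 big1 // => i _; have /h12 := leq_trans (ltn_ord i) (leq_maxl N1 N2).
have [Xi | nXi] := pselect (X i); first by rewrite (Xh2 i (fun nX => nX Xi)) subr0.
by rewrite (Xh1 i nXi) sub0r => /eqP; rewrite oppr_eq0 => /eqP.
Qed.

Lemma independent_of_chain (J : nat -> M -> Prop) :
  (forall n, submodule (J n)) -> (forall n x, J n.+1 x -> J n x) ->
  (forall n x, H n x -> J n x) -> (forall n x, H n x -> J n.+1 x -> x = 0) ->
  independent H.
Proof.
move=> subJ Jdec HJ HJ0 N h Hh sum0.
have Jmono : {homo J : m n / (m <= n)%N >-> forall x, n x -> m x}.
  by apply: homo_leq => // [A B C AB BC x /BC /AB].
elim/ltn_ind => n IH ltnN; apply: HJ0 (Hh n) _.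
move: sum0; rewrite -(big_mkord xpredT) (big_cat_nat (leq0n n) (ltnW ltnN)) /=.
rewrite big_nat_cond big1 => [|i /andP[/andP[_ ltin] _]]; last first.
  exact: IH ltin (ltn_trans ltin ltnN).
rewrite add0r big_ltn // => /eqP; rewrite addr_eq0 => /eqP ->.
rewrite big_nat_cond; apply/(submodN (subJ _))/(submod_sum (subJ _)).
by move=> i /andP[/andP[ltni _] _]; apply: Jmono ltni _ (HJ _ _ (Hh i)).
Qed.

End FamilySum.

Lemma infinite_split (P : nat -> Prop) : (forall N, exists n, (N <= n)%N /\ P n) ->
  exists X : nat -> Prop, (forall N, exists n, [/\ (N <= n)%N, P n & X n]) /\
                          (forall N, exists n, [/\ (N <= n)%N, P n & ~ X n]).
Proof.
(* Enumerate [P] increasingly and take the even-indexed part. *)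
move=> infP; have [next nextP] := choice infP.
pose e k := iter k (fun n => next n.+1) (next 0).
have e_inc : {homo e : i j / (i < j)%N}.
  by apply: homo_ltn => [i j k /ltn_trans|k]; [apply | case: (nextP (e k).+1)].
have e_ge k : (k <= e k)%N by elim: k => // k IH; apply: leq_ltn_trans IH (e_inc _ _ _).
have Pe k : P (e k) by case: k => [|k]; [case: (nextP 0) | case: (nextP (e k).+1)].
exists (fun n => exists k, n = e k.*2); split=> N.
  exists (e N.*2); split=> //; last by exists N.
  by apply: leq_trans (e_ge _); rewrite -addnn leq_addr.
exists (e N.*2.+1); split=> //.
  by apply: leq_trans (e_ge _); rewrite -addnn ltnW // ltnS leq_addr.
case=> k /eqP; rewrite (inj_eq (incn_inj (leq_mono e_inc))) => /eqP /(congr1 odd).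
by rewrite /= !odd_double.
Qed.

Definition eventually_annihilated (R : pzRingType) (H : nat -> R -> Prop) (a : R) :=
  exists N, forall n, (N <= n)%N -> forall h, H n h -> h * a = 0.

Section IndependentIdeals.
Variables (R : pzRingType) (H : nat -> R -> Prop).
Hypothesis injR : left_selfinjective R.
Hypothesis idH : forall n, two_sided_ideal (H n).
Hypothesis indepH : independent H.

Let subH n : submodule (H n : R^o -> Prop) := proj1 (idH n).

Lemma independent_right_projector (X : nat -> Prop) : exists y,
  (forall n h, X n -> H n h -> h * y = h) /\ (forall n h, ~ X n -> H n h -> h * y = 0).
Proof.
(* Baer's criterion for the projection of the direct sum of the ideals indexed in [X]
   and outside [X] onto its first summand. *)
pose Xc n := ~ X n.
pose sumX := @family_sum _ R^o H X; pose sumXc := @family_sum _ R^o H Xc.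
have subX : submodule sumX := family_sum_submodule subH X.
have subXc : submodule sumXc := family_sum_submodule subH Xc.
pose L v := exists u u', [/\ sumX u, sumXc u' & v = u + u'].
have [|phi phiE] := @factor_through (R * R) R R 0
  (fun p => sumX p.1 /\ sumXc p.2) (fun p => p.1 + p.2) fst.
  move=> [u1 u1'] [u2 u2'] /= [X1 Xc1] [X2 Xc2] E; apply/eqP; rewrite -subr_eq0.
  apply/eqP/(family_sum_disjoint subH indepH (submodB subX X1 X2)).
  have -> : u1 - u2 = (u1 + u1') - (u2 + u1') by rewrite opprD addrACA subrr addr0.
  by rewrite E opprD addrACA subrr add0r; apply: (submodB subXc).
have idL : left_ideal L.
  apply: left_idealP => [|a _ _ [u1 [u1' [X1 Xc1 ->]]] [u2 [u2' [X2 Xc2 ->]]]].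
    by exists 0, 0; rewrite addr0; split=> //; apply: submod0.
  exists (a * u1 + u2), (a * u1' + u2'); split; try exact: submodDZ.
  by rewrite mulrDr addrACA.
have [|y phiy] := selfinjective_baer injR idL (phi := phi).
  move=> a _ _ [u1 [u1' [X1 Xc1 ->]]] [u2 [u2' [X2 Xc2 ->]]].
  rewrite (phiE (u1, u1')) // (phiE (u2, u2')) //.
  have -> : a * (u1 + u1') + (u2 + u2') = (a * u1 + u2) + (a * u1' + u2').
    by rewrite mulrDr addrACA.
  by rewrite (phiE (a * u1 + u2, a * u1' + u2')) //; split; apply: submodDZ.
exists y; split=> n h Xn Hh.
  have XH := family_sum_single subH Xn Hh; have Xc0 := submod0 subXc.
  rewrite -phiy; last by exists h, 0; rewrite addr0.
  by rewrite -[h in phi h]addr0 (phiE (h, 0)).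
have XcH := family_sum_single subH (X := Xc) Xn Hh; have X0 := submod0 subX.
rewrite -phiy; last by exists 0, h; rewrite add0r.
by rewrite -[h in phi h]add0r (phiE (0, h)).
Qed.

Lemma eventually_annihilated_ideal : left_ideal (eventually_annihilated H).
Proof.
apply: left_idealP => [|a u v [N1 annu] [N2 annv]]; first by exists 0%N => *; rewrite mulr0.
exists (maxn N1 N2) => n; rewrite geq_max => /andP[le1 le2] h Hh.
by rewrite mulrDr mulrA (annu n le1 _ (idealMr (idH n) a Hh)) add0r (annv n le2).
Qed.

Hypothesis semiR : left_semiartinian R.

Lemma independent_ideals_not_all_nonzero : ~ (forall n, exists2 x, H n x & x <> 0).
Proof.
move=> nzH; pose Q := eventually_annihilated H.
have notQ1 : ~ Q 1.
  case=> N /(_ N (leqnn N)) ann; have [x Hx] := nzH N.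
  by rewrite -[x]mulr1 ann.
have [z Qz gen_z] := left_ideal_quotient_simple_generator semiR
  eventually_annihilated_ideal (ex_intro _ 1 notQ1).
pose Z n := exists2 h, H n h & h * z <> 0.
have infZ N : exists n, (N <= n)%N /\ Z n.
  apply: contrapT => noZ; apply: Qz; exists N => n Nn h Hh.
  by apply: contrapT => hz0; apply: noZ; exists n; split=> //; exists h.
have [X [infX infXc]] := infinite_split infZ.
have [y [yX yXc]] := independent_right_projector X.
case: (gen_z y) => [[N ann] | [c [N ann]]].
  have [n [Nn [h Hh hz0] Xn]] := infX N; apply: hz0.
  by rewrite -(yX n h Xn Hh) -mulrA; apply: ann n Nn h Hh.
have [n [Nn [h Hh hz0] Xn]] := infXc N; apply: hz0.
have := ann n Nn h Hh; rewrite mulrBr !mulrA (yXc n (h * c)) ?mul0r ?sub0r //.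
  by move/eqP; rewrite oppr_eq0 => /eqP.
exact: idealMr.
Qed.

End IndependentIdeals.

(** * Directed separating families of ideals *)

Section DirectedIdeals.
Variables (R : pzRingType) (I : Type) (le : I -> I -> Prop) (J : I -> R -> Prop).
Hypothesis injR : left_selfinjective R.
Hypothesis semiR : left_semiartinian R.
Hypothesis le_directed : forall i j, exists k, le i k /\ le j k.
Hypothesis idJ : forall i, two_sided_ideal (J i).
Hypothesis J_anti : forall i j x, le i j -> J j x -> J i x.
Hypothesis J_sep : forall x, (forall i, J i x) -> x = 0.

Lemma nonzero_ideal_escapes k : (exists2 x, J k x & x <> 0) ->
  exists (H : R -> Prop) k', [/\ two_sided_ideal H, exists2 x, H x & x <> 0,
    forall x, H x -> J k x, le k k' & forall x, H x -> J k' x -> x = 0].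
Proof.
move=> nzJk; have [w Jkw gen_w] := left_ideal_simple_generator semiR (proj1 (idJ k)) nzJk.
have [i notJiw] : exists i, ~ J i w.
  apply: contrapT => noi; case: gen_w => + _; apply; apply: J_sep => i.
  by apply: contrapT => Jiw; apply: noi; exists i.
have [k' [kk' ik']] := le_directed k i.
exists (ideal_gen w), k'; split=> //.
- exact: ideal_gen_two_sided.
- by exists w; [exact: ideal_gen_id | case: gen_w].
- exact: ideal_gen_sub (idJ k) Jkw.
move=> x gen_x Jk'x; apply: contrapT => x0; apply: notJiw; apply: (J_anti ik').
by apply: (ideal_gen_minimal gen_w injR (idJ k') gen_x).
Qed.

Lemma directed_ideals_exists_zero : inhabited I -> exists k, forall x, J k x -> x = 0.
Proof.
case=> i0; apply: contrapT => noz.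
have nzJ k : exists2 x, J k x & x <> 0.
  apply: contrapT => nx; apply: noz; exists k => x Jx.
  by apply: contrapT => x0; apply: nx; exists x.
have [Hof HofP] := choice (fun k => nonzero_ideal_escapes (nzJ k)).
have [next nextP] := choice HofP.
pose kk n := iter n next i0; pose H n := Hof (kk n).
have HP n := nextP (kk n).
apply: (independent_ideals_not_all_nonzero injR (H := H)) => // [n||n].
- by case: (HP n).
- apply: (@independent_of_chain _ R^o H (fun n => J (kk n))) => [n|n x|n x|n x].
  + exact: (proj1 (idJ _)).
  + by case: (HP n) => _ _ _ lek _; apply: J_anti lek.
  + by case: (HP n) => _ _ HJ _ _; apply: HJ.
  + by case: (HP n) => _ _ _ _; apply.
by case: (HP n).
Qed.

End DirectedIdeals.


(** * Embeddings into finite dimensional spaces *)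

Lemma nonincreasing_stationary (d : nat -> nat) : (forall n, (d n.+1 <= d n)%N) ->
  exists N, forall n, (N <= n)%N -> d n = d N.
Proof.
move=> d_dec; have d_anti : {homo d : m n / (m <= n)%N >-> (n <= m)%N}.
  by apply: homo_leq => // x y z /[swap]; apply: leq_trans.
have [m /asboolP [N <-] minN] := ex_minnP (ex_intro (fun m => `[< exists n, d n = m >]) _
  (asboolT (ex_intro _ 0%N erefl))).
exists N => n leNn; apply/eqP; rewrite eqn_leq d_anti //=.
by apply: minN; apply/asboolP; exists n.
Qed.

Section InjectiveIntoFiniteDimensional.
Variables (K : fieldType) (A : lmodType K) (V : vectType K) (g : A -> V).
Hypothesis g_lin : linear g.
Hypothesis g_inj : injective g.

Lemma image_vspace (P : A -> Prop) : submodule P ->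
  exists U : {vspace V}, forall v, v \in U <-> exists2 a, P a & g a = v.
Proof.
(* A subspace of maximal dimension inside the image of [P] is the whole image. *)
move=> subP.
pose in_image (U : {vspace V}) := forall v, v \in U -> exists2 a, P a & g a = v.
pose dimP (d : nat) := `[< exists U, in_image U /\ \dim U = d >].
have dimP0 : dimP 0%N.
  apply/asboolP; exists 0%VS; rewrite dimv0; split=> // v; rewrite memv0 => /eqP ->.
  by exists 0; [apply: submod0 | apply: linear_fun0].
have dimP_le d : dimP d -> (d <= \dim {:V})%N.
  by move=> /asboolP [U [_ <-]]; apply/dimvS/subvf.
have [d /asboolP [U [imgU <-]] maxU] := ex_maxnP (ex_intro dimP _ dimP0) dimP_le.
exists U => v; split; first exact: imgU.
case=> a Pa <-; apply/idPn => gaU.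
have : dimP (\dim (U + <[g a]>)).
  apply/asboolP; exists (U + <[g a]>)%VS; split=> //.
  move=> _ /memv_addP [u Uu [_ /vlineP [c ->] ->]].
  have [b Pb <-] := imgU u Uu.
  by exists (c *: a + b); [apply: submodDZ | rewrite g_lin addrC].
move/maxU; apply/negP; rewrite -ltnNge (ltn_leqif (dimv_leqif_sup (addvSl U <[g a]>))).
by rewrite subv_add subvv -memvE.
Qed.

Lemma linear_injective_finite_dimensional : finite_dimensional A.
Proof.
have [U imgU] := image_vspace (P := fun _ => True) (conj I (fun _ _ _ _ _ => I)).
have [pre preP] : {pre : V -> A & forall v, v \in U -> g (pre v) = v}.
  apply: (@choice _ _ (fun v a => v \in U -> g a = v)) => v.
  have [vU | _] := boolP (v \in U); last by exists 0.
  by have [a _ <-] := (imgU v).1 vU; exists a.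
pose b := vbasis U; exists [seq pre v | v <- b] => x.
exists (fun i => nth 0 [seq coord b j (g x) | j <- enum 'I_(\dim U)] i).
apply: g_inj; rewrite size_map size_tuple.
rewrite (big_morph g (linear_funD g_lin) (linear_fun0 g_lin)).
rewrite {1}(coord_vbasis (_ : g x \in U)); last by apply/imgU; exists x.
apply: eq_bigr => i _; rewrite (linear_funZ g_lin).
rewrite (nth_map i) ?size_enum_ord // nth_ord_enum (nth_map 0) ?size_tuple //.
by rewrite preP // vbasis_mem // mem_nth ?size_tuple.
Qed.

End InjectiveIntoFiniteDimensional.

Lemma linear_injective_left_artinian (K : fieldType) (A : lalgType K) (V : vectType K)
    (g : A -> V) :
  linear g -> injective g -> left_artinian A.
Proof.
move=> g_lin g_inj Id idId Id_dec.
have subId n : submodule (Id n).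
  split=> [|c x y Ix Iy]; first by case: (idId n).
  by rewrite -mulr_algl; apply: (submodDZ (idId n)).
have [U imgU] := choice (fun n => image_vspace g_lin (subId n)).
have IdU n x : Id n x <-> g x \in U n.
  by rewrite imgU; split=> [Ix | [a Ia /g_inj <-]]; first exists x.
have U_dec : {homo U : m n / (m <= n)%N >-> (n <= m)%VS}.
  apply: homo_leq => [||n]; [exact: subvv | by move=> ? ? ? /[swap]; apply: subv_trans |].
  by apply/subvP => _ /imgU [a /Id_dec Ia <-]; apply/imgU; exists a.
have [N dimN] := nonincreasing_stationary (fun n => dimvS (U_dec n n.+1 (leqnSn n))).
exists N => n leNn x; rewrite !IdU; suff -> : U n = U N by [].
by apply/eqP; rewrite eqEdim U_dec //= dimN.
Qed.

(** * Profinite algebras *)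

Lemma alg_morph_kernel (K : fieldType) (U V : lalgType K) (g : U -> V) :
  alg_morph g -> two_sided_ideal (fun x => g x = 0).
Proof.
case=> g_lin [_ gM]; have g0 := linear_fun0 g_lin; split.
  apply: left_idealP => // a u v gu gv.
  by rewrite (linear_funD g_lin) gM gu gv mulr0 addr0.
by move=> a x gx; rewrite gM gx mul0r.
Qed.

Theorem theorem5p2 (K : fieldType) (A : algType K) :
  profinite_algebra A -> left_semiartinian A -> left_selfinjective A ->
  finite_dimensional A /\ quasi_Frobenius A.
Proof.
move=> [I [le [B [f [p [inhI [_ [le_dir [f_morph [_ [_ [p_morph [p_compat [p_sep _]]]]]]]]]]]]]]
  semiA injA.
have [|i j a le_ij pj0|k ker_k] := directed_ideals_exists_zero (J := fun i a => p i a = 0)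
  injA semiA le_dir _ _ p_sep inhI.
- by move=> i; apply: alg_morph_kernel.
- by rewrite -(p_compat i j le_ij a) pj0 (linear_fun0 (proj1 (f_morph i j le_ij))).
have p_lin : linear (p k) := proj1 (p_morph k).
have p_inj := linear_fun_inj p_lin ker_k.
split; first exact: linear_injective_finite_dimensional p_lin p_inj.
by split=> //; apply: linear_injective_left_artinian p_lin p_inj.
Qed.
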